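(* Let $F=(n_F)_{n\ge0}$ be the sequence of natural numbers, $n_F=n$ for $n\ge1$. Then for all integers $k,n$ with $0\le k<n$, the layer $\langle\Phi_{k+1}\to\Phi_n\rangle$ of the cobweb poset of $F$ (which has $m=n-k$ levels) admits at least one tiling by blocks of type $\sigma P_m$.
   Context: Notation: $n_F\equiv F_n$. For a sequence $F=(n_F)_{n\ge0}$ of nonnegative integers, the cobweb poset of $F$ has, for each $s\ge1$, a level $\Phi_s$ consisting of $s_F$ distinct vertices (levels pairwise disjoint), plus a root level $\Phi_0$ with one vertex; for $x\in\Phi_i$, $y\in\Phi_j$ one has $x<y$ iff $i<j$. For $1\le a\le b$, the layer $\langle\Phi_a\to\Phi_b\rangle$ is the subposet on $\Phi_a\cup\dots\cup\Phi_b$; it has $m=b-a+1$ levels, and its maximal chains are exactly the tuples $(x_a,\dots,x_b)$ with $x_j\in\Phi_j$, i.e. the set $\Phi_a\times\dots\times\Phi_b$. For a permutation $\sigma$ of $\{1,\dots,m\}$, a block of type $\sigma P_m$ in this layer is the subposet induced on $V_a\cup\dots\cup V_b$ where $V_{a-1+i}\subseteq\Phi_{a-1+i}$ and $|V_{a-1+i}|=\sigma(i)_F$ for $i=1,\dots,m$ (a copy of the prime cobweb poset $P_m$, whose levels have sizes $1_F,\dots,m_F$, with its levels permuted by $\sigma$); its maximal chains form the set $V_a\times\dots\times V_b$. A tiling of the layer by blocks of type $\sigma P_m$ is a finite family of such blocks ($\sigma$ may vary from block to block) that are pairwise max-disjoint (no two share a maximal chain) and together contain every maximal chain of the layer; equivalently,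 the sets $V_a\times\dots\times V_b$ of the blocks partition $\Phi_a\times\dots\times\Phi_b$. *)

From mathcomp Require Import all_boot all_fingroup.
Set Implicit Arguments. Unset Strict Implicit. Unset Printing Implicit Defensive.

(* Cobweb poset of a sequence F : nat -> nat.  Level Phi_s has F s vertices,
   modelled as 'I_(F s).  The layer <Phi_a -> Phi_(a+m-1)> has m levels;
   its i-th level (i : 'I_m, 0-based) is Phi_(a+i). *)

(* A maximal chain of the layer: one vertex in each level. *)
Definition chain (F : nat -> nat) (a m : nat) := forall i : 'I_m, 'I_(F (a + i)).

(* A candidate block: a permutation sigma of the m levels (0-based, so the
   paper's sigma(i+1) is (bsigma i).+1) and subsets V_(a+i) of Phi_(a+i). *)
Record block (F : nat -> nat) (a m : nat) := Block {
  bsigma : 'S_m;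
  bV : forall i : 'I_m, {set 'I_(F (a + i))}
}.

Definition is_block F a m (B : block F a m) : Prop :=
  forall i : 'I_m, #|bV B i| = F (bsigma B i).+1.

Definition in_block F a m (B : block F a m) (c : chain F a m) : bool :=
  [forall i : 'I_m, c i \in bV B i].

(* A tiling: a finite family of blocks of type sigma P_m (sigma may vary)
   whose chain-sets partition the set of maximal chains of the layer:
   every maximal chain lies in exactly one member of the family. *)
(* j-th member of the family (default beyond the end is never used). *)
Definition nth_block F a m (T : seq (block F a m)) (j : nat) : block F a m :=
  nth (Block 1 (fun i => set0)) T j.

Definition tiling F a m (T : seq (block F a m)) : Prop :=
  (forall j, j < size T -> is_block (nth_block T j)) /\
  (forall c : chain F a m, count (fun B => in_block B c) T = 1).

Definition natF (n : nat) : nat := n.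

From Pilot Require Import Defs.
From mathcomp Require Import all_boot all_fingroup.
From mathcomp Require Import zify.
From Stdlib Require List.
Set Implicit Arguments. Unset Strict Implicit. Unset Printing Implicit Defensive.

(* We first work in a simply typed model: the layer with first level a and m
   levels has levels [0, a + i) for i < m, a block is a function sigma on
   level indices together with predicates V_i on nat, and a chain is a
   function c with c i < a + i.  Tilings of these layers are built by a
   double induction on (m, a), following the paper's recursion:
   - a tiling of the layer (a+1, m) extends to (a+1, m+1) by adding, as new
     top level, the first m+1 vertices of level a+1+m (sigma(m) = m);
   - a tiling of the layer (a, m+1) is rotated to (a+1, m+1): old levels
     1..m become new levels 0..m-1 (same sizes), and old level 0 becomes the
     remaining top vertices [m+1, a+1+m) of the new top level.
   The two families together partition the chains of (a+1, m+1) according to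
   whether the top vertex is below m+1 or not.  Finally the simply typed
   tiling is transported to the dependently typed blocks of Defs. *)

Record nblock := NBlock { nsigma : nat -> nat; nV : nat -> pred nat }.

Definition perm_below m (s : nat -> nat) :=
  (forall i, i < m -> s i < m) /\
  (forall i j, i < m -> j < m -> s i = s j -> i = j).

Definition nblock_ok a m (B : nblock) :=
  perm_below m (nsigma B) /\
  forall i, i < m -> count (nV B i) (iota 0 (a + i)) = (nsigma B i).+1.

Definition nchain a m (c : nat -> nat) := forall i, i < m -> c i < a + i.

Definition nin_block m (B : nblock) (c : nat -> nat) :=
  all (fun i => nV B i (c i)) (iota 0 m).

Definition ntiling a m (T : seq nblock) :=
  (forall B, List.In B T -> nblock_ok a m B) /\
  (forall c, nchain a m c -> count (fun B => nin_block m B c) T = 1).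

Lemma eq_nin_block m B B' c c' :
  (forall i, i < m -> nV B i (c i) = nV B' i (c' i)) ->
  nin_block m B c = nin_block m B' c'.
Proof. by move=> eqV; apply: eq_in_all => i; rewrite mem_iota add0n; apply: eqV. Qed.

Lemma nin_block_top m B c :
  nin_block m.+1 B c = nin_block m B c && nV B m (c m).
Proof. by rewrite /nin_block -addn1 iotaD all_cat /= andbT. Qed.

Lemma nin_block_bottom m B c :
  nin_block m.+1 B c =
  nV B 0 (c 0) &&
  nin_block m (NBlock (fun i => nsigma B i.+1) (fun i => nV B i.+1)) (fun i => c i.+1).
Proof. by rewrite /nin_block /= -[1]addn0 iotaDl all_map. Qed.

Lemma iota_top_level a m :
  iota 0 (a.+1 + m) = iota 0 m.+1 ++ map (addn m.+1) (iota 0 a).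
Proof. by rewrite addSnnS addnC iotaD -iotaDl addn0. Qed.

Section Extensions.

Variable m : nat.

Definition extend_top (B : nblock) : nblock :=
  NBlock (fun i => if i < m then nsigma B i else m)
         (fun i x => if i < m then nV B i x else x < m.+1).

Definition rotate_up (C : nblock) : nblock :=
  NBlock (fun i => if i < m then nsigma C i.+1 else nsigma C 0)
         (fun i x => if i < m then nV C i.+1 x
                     else (m.+1 <= x) && nV C 0 (x - m.+1)).

Lemma perm_below_extend s :
  perm_below m s -> perm_below m.+1 (fun i => if i < m then s i else m).
Proof.
move=> [s_lt s_inj]; split=> [i i_lt | i j i_lt j_lt].
  by case: (ltnP i m) => lt_im /=; first exact: ltnW (s_lt _ lt_im).
case: (ltnP i m) => lt_im; case: (ltnP j m) => lt_jm.
- exact: s_inj.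
- by move=> e; have := s_lt _ lt_im; rewrite e ltnn.
- by move=> e; have := s_lt _ lt_jm; rewrite -e ltnn.
- by move=> _; lia.
Qed.

Lemma perm_below_rotate s :
  perm_below m.+1 s -> perm_below m.+1 (fun i => if i < m then s i.+1 else s 0).
Proof.
move=> [s_lt s_inj]; split=> [i i_lt | i j i_lt j_lt].
  by case: (ltnP i m) => lt_im /=; apply: s_lt.
case: (ltnP i m) => lt_im; case: (ltnP j m) => lt_jm.
- by move=> /(s_inj i.+1 j.+1 lt_im lt_jm) [].
- by move=> /(s_inj i.+1 0 lt_im (ltn0Sn m)).
- by move=> /(s_inj 0 j.+1 (ltn0Sn m) lt_jm).
- by move=> _; lia.
Qed.

Lemma extend_top_ok a B : nblock_ok a.+1 m B -> nblock_ok a.+1 m.+1 (extend_top B).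
Proof.
move=> [s_perm cardV]; split; first exact: perm_below_extend.
move=> i; cbn [nV nsigma extend_top].
rewrite ltnS leq_eqVlt => /orP [/eqP -> | lt_im]; last first.
  by rewrite lt_im; exact: cardV i lt_im.
rewrite ltnn iota_top_level count_cat count_map.
have all_low : count (fun x => x < m.+1) (iota 0 m.+1) = m.+1.
  rewrite (eq_in_count (a2 := predT)) ?count_predT ?size_iota // => x.
  by rewrite mem_iota.
have no_high : count (preim (addn m.+1) (fun x => x < m.+1)) (iota 0 a) = 0.
  by rewrite (eq_count (a2 := pred0)) ?count_pred0 // => x /=; rewrite ltnNge leq_addr.
by rewrite all_low no_high addn0.
Qed.

Lemma rotate_up_ok a C : nblock_ok a m.+1 C -> nblock_ok a.+1 m.+1 (rotate_up C).
Proof.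
move=> [s_perm cardV]; split; first exact: perm_below_rotate.
move=> i; cbn [nV nsigma rotate_up].
rewrite ltnS leq_eqVlt => /orP [/eqP -> | lt_im]; last first.
  by rewrite lt_im addSnnS; exact: cardV i.+1 lt_im.
rewrite ltnn iota_top_level count_cat count_map -(cardV 0) // addn0.
have no_low : count (fun x => (m.+1 <= x) && nV C 0 (x - m.+1)) (iota 0 m.+1) = 0.
  rewrite (eq_in_count (a2 := pred0)) ?count_pred0 // => x.
  by rewrite mem_iota => /andP [_ x_lt] /=; rewrite leqNgt x_lt.
by rewrite no_low add0n; apply: eq_count => x /=; rewrite leq_addr addKn.
Qed.

Lemma ntiling_step a T1 T2 :
  ntiling a.+1 m T1 -> ntiling a m.+1 T2 ->
  ntiling a.+1 m.+1 (map extend_top T1 ++ map rotate_up T2).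
Proof.
move=> [ok1 cover1] [ok2 cover2]; split.
  move=> B /List.in_app_iff [] /List.in_map_iff [B0 [<- inB0]].
    exact/extend_top_ok/ok1.
  exact/rotate_up_ok/ok2.
move=> c c_chain; rewrite count_cat !count_map.
case: (ltnP (c m) m.+1) => top_c.
  have in_ext B : nin_block m.+1 (extend_top B) c = nin_block m B c.
    by rewrite nin_block_top /= ltnn top_c andbT; apply: eq_nin_block => i /= ->.
  have notin_rot C : nin_block m.+1 (rotate_up C) c = false.
    by rewrite nin_block_top /= ltnn leqNgt top_c andbF.
  rewrite (eq_count in_ext) (eq_count notin_rot) count_pred0 addn0.
  by apply: cover1 => i lt_im; apply/c_chain/ltnW.
pose c' i := if i is i'.+1 then c i' else c m - m.+1.
have c'_chain : nchain a m.+1 c'.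
  case=> [|i] /= lt_i; last by rewrite -addSnnS; apply/c_chain/ltnW.
  by rewrite addn0 ltn_subLR // addnC -addSnnS; apply: c_chain.
have notin_ext B : nin_block m.+1 (extend_top B) c = false.
  by rewrite nin_block_top /= ltnn ltnNge top_c andbF.
have in_rot C : nin_block m.+1 (rotate_up C) c = nin_block m.+1 C c'.
  rewrite nin_block_top /= ltnn top_c nin_block_bottom /= andbC; congr andb.
  by apply: eq_nin_block => i /= ->.
by rewrite (eq_count notin_ext) (eq_count in_rot) count_pred0 cover2.
Qed.

End Extensions.

Lemma ntiling_exists m a : exists T, ntiling a m T.
Proof.
elim: m a => [|m IHm] a.
  exists [:: NBlock id (fun _ _ => true)]; split=> [B [<- | []] | //].
  by do 2?split.
elim: a => [|a IHa].
  by exists [::]; split=> // c c_chain; have := c_chain 0 (ltn0Sn _).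
have [T1 tiling1] := IHm a.+1; have [T2 tiling2] := IHa.
by exists (map (extend_top m) T1 ++ map (rotate_up m) T2); apply: ntiling_step.
Qed.

Lemma card_set_val N (P : pred nat) :
  #|[set x : 'I_N | P (val x)]| = count P (iota 0 N).
Proof.
rewrite cardsE cardE /enum_mem size_filter -val_enum_ord count_map enumT.
by apply: eq_count.
Qed.

Definition perm_of m (f : 'I_m -> 'I_m) : 'S_m :=
  odflt 1%g [pick s : 'S_m | [forall i, s i == f i]].

Lemma perm_ofE m (f : 'I_m -> 'I_m) : injective f -> perm_of f =1 f.
Proof.
rewrite /perm_of => f_inj; case: pickP => [s /forallP s_eq i | no_perm].
  exact/eqP.
suff : [forall i, perm f_inj i == f i] by rewrite no_perm.
by apply/forallP => i; rewrite permE.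
Qed.

Definition to_block a m (B : nblock) : block natF a m :=
  Block (perm_of (fun i : 'I_m => insubd i (nsigma B i)))
        (fun i => [set x : 'I_(natF (a + i)) | nV B i (val x)]).

(* A chain read as a function on nat (0 beyond the last level). *)
Definition chain_val a m (c : chain natF a m) (i : nat) : nat :=
  if insub i is Some i' then val (c i') else 0.

Lemma to_block_ok a m B : nblock_ok a m B -> is_block (to_block a m B).
Proof.
move=> [[s_lt s_inj] cardV] i /=.
have sigma_inj : injective (fun i : 'I_m => insubd i (nsigma B i)).
  move=> x y /(congr1 val); rewrite !val_insubd !s_lt // => /s_inj e.
  exact/val_inj/e.
by rewrite card_set_val perm_ofE // val_insubd s_lt // cardV.
Qed.

Lemma chain_val_ok a m (c : chain natF a m) : nchain a m (chain_val c).
Proof. by move=> i lt_im; rewrite /chain_val insubT; apply: ltn_ord. Qed.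

Lemma in_to_block a m B (c : chain natF a m) :
  in_block (to_block a m B) c = nin_block m B (chain_val c).
Proof.
apply/forallP/allP => /= inV i.
  rewrite mem_iota add0n => lt_im.
  by have := inV (Ordinal lt_im); rewrite inE /chain_val insubT.
by rewrite inE; have := inV i; rewrite mem_iota add0n ltn_ord /chain_val valK; apply.
Qed.

Lemma In_nth (T : Type) (x0 : T) s j : j < size s -> List.In (nth x0 s j) s.
Proof. by elim: s j => [|x s IH] [|j] //= lt_j; [left | right; apply: IH]. Qed.

Theorem theorem1 (k n : nat) (hkn : k < n) :
  exists T : seq (block natF k.+1 (n - k)), tiling T.
Proof.
have [T [T_ok T_cover]] := ntiling_exists (n - k) k.+1.
exists (map (to_block k.+1 (n - k)) T); split.
  move=> j; rewrite size_map => lt_j.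
  rewrite /nth_block (nth_map (NBlock id (fun _ _ => true))) //.
  exact/to_block_ok/T_ok/In_nth.
move=> c; rewrite count_map -(T_cover _ (chain_val_ok c)).
by apply: eq_count => B; apply: in_to_block.
Qed.
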